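(* Let $T,S>0$. The concatenation map $\theta:\mathcal C_0([0,T],\mathfrak a)\otimes\mathcal C_0([0,S],\mathfrak a)\to\mathcal C_0([0,T+S],\mathfrak a)$, $\pi_1\otimes\pi_2\mapsto\pi_1\ast\pi_2$, is a crystal isomorphism. More precisely, for all $\pi_1,\pi_2$, $\alpha\in\Delta$ and $c\in\mathbb R$: (i) $\gamma(\pi_1\ast\pi_2)=\gamma(\pi_1\otimes\pi_2)$; (ii) $\varepsilon_\alpha(\pi_1\ast\pi_2)=\varepsilon_\alpha(\pi_1\otimes\pi_2)$ (equivalently $\varphi_\alpha(\pi_1\ast\pi_2)=\varphi_\alpha(\pi_1\otimes\pi_2)$); (iii) $e^c_\alpha\cdot(\pi_1\ast\pi_2)=\theta(e^c_\alpha\cdot(\pi_1\otimes\pi_2))$.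
   Context: $\mathfrak a$ is the real Cartan subalgebra of a complex semisimple Lie algebra, $\Delta$ its simple roots, $\alpha^\vee$ the coroot of $\alpha$. For $T>0$, $\mathcal C_0([0,T],\mathfrak a)$ (continuous paths with $\pi(0)=0$) carries the geometric crystal structure: $\gamma(\pi)=\pi(T)$, $\varepsilon_\alpha(\pi)=\log\int_0^Te^{-\alpha(\pi(s))}ds$, $\varphi_\alpha(\pi)=\alpha(\pi(T))+\varepsilon_\alpha(\pi)$, $(e^c_\alpha\cdot\pi)(t)=\pi(t)+\log\big(1+(e^c-1)e^{-\varepsilon_\alpha(\pi)}\int_0^te^{-\alpha(\pi(s))}ds\big)\alpha^\vee$. The tensor product $X\otimes Y$ of two such crystals is $X\times Y$ with $\gamma(x\otimes y)=\gamma(x)+\gamma(y)$, $\varepsilon_\alpha(x\otimes y)=\varepsilon_\alpha(x)+\log(1+e^{\varepsilon_\alpha(y)-\varphi_\alpha(x)})$, $\varphi_\alpha(x\otimes y)=\varphi_\alpha(y)+\log(1+e^{\varphi_\alpha(x)-\varepsilon_\alpha(y)})$, $e^c_\alpha(x\otimes y)=e^{c_1}_\alpha x\otimes e^{c_2}_\alpha y$ with $e^{c_1}=\frac{e^{c+\varphi_\alpha(x)}+e^{\varepsilon_\alpha(y)}}{e^{\varphi_\alpha(x)}+e^{\varepsilon_\alpha(y)}}$, $e^{c_2}=\frac{e^{\varphi_\alpha(x)}+e^{\varepsilon_\alpha(y)}}{e^{\varphi_\alpha(x)}+e^{-c+\varepsilon_\alpha(y)}}$. Concatenation: $(\pi_1\ast\pi_2)(t)=\pi_1(t)$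 for $0\le t\le T$ and $\pi_1(T)+\pi_2(t-T)$ for $T\le t\le T+S$. A crystal isomorphism is a bijection preserving $\gamma,\varepsilon_\alpha,\varphi_\alpha$ and commuting with all $e^c_\alpha$, whose inverse has the same properties. *)

From HB Require Import structures.
From mathcomp Require Import all_boot all_order all_algebra.
From mathcomp Require Import all_classical all_reals all_analysis.
Set Implicit Arguments. Unset Strict Implicit. Unset Printing Implicit Defensive.
Import Order.TTheory GRing.Theory Num.Theory.
Import numFieldNormedType.Exports.
Local Open Scope classical_set_scope.
Local Open Scope ring_scope.

(* The real Cartan subalgebra a is modelled as 'rV[R]_n (n = rank).
   A simple root alpha_i is a linear functional, given by a column vector;
   its value at x : a is [pairing x (alpha i)]. The coroot alpha_i^vee is a
   vector of a. *)
Definition pairing (R : realType) (n : nat) (x : 'rV[R]_n) (a : 'cV[R]_n) : R :=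
  (x *m a) 0 0.

Definition cartan_entry (R : realType) (n : nat)
  (alpha : 'I_n -> 'cV[R]_n) (coroot : 'I_n -> 'rV[R]_n) (i j : 'I_n) : R :=
  pairing (coroot i) (alpha j).

(* (alpha_i)_i, (alpha_i^vee)_i are the simple roots / coroots of a complex
   semisimple Lie algebra (with a = real span of the coroots): the coroots form a
   basis of a and the Cartan matrix is a Cartan matrix of finite type
   (integer entries, 2 on the diagonal, nonpositive off the diagonal,
   A_ij = 0 <-> A_ji = 0, symmetrizable with positive definite symmetrization). *)
Definition semisimple_root_datum (R : realType) (n : nat)
  (alpha : 'I_n -> 'cV[R]_n) (coroot : 'I_n -> 'rV[R]_n) : Prop :=
  let A := cartan_entry alpha coroot in
  row_free (\matrix_(i < n) coroot i) /\
  [/\ (forall i, A i i = 2),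
      (forall i j, exists z : int, A i j = z%:~R),
      (forall i j, i != j -> A i j <= 0),
      (forall i j, A i j = 0 <-> A j i = 0) &
      (exists dd : 'I_n -> R,
          (forall i, 0 < dd i) /\
          (forall i j, dd i * A i j = dd j * A j i) /\
          (forall x : 'I_n -> R, (exists i, x i != 0) ->
              0 < \sum_(i < n) \sum_(j < n) x i * dd i * A i j * x j))].

(* Paths: functions R -> a; pi is an element of C_0([0,T], a) when it is
   continuous on [0,T] and pi 0 = 0. Only the values on [0,T] matter. *)
Definition is_path (R : realType) (n : nat) (T : R) (pi : R -> 'rV[R]_n) : Prop :=
  {within `[0, T], continuous pi} /\ pi 0 = 0.

Definition path_eq (R : realType) (n : nat) (T : R) (p q : R -> 'rV[R]_n) : Prop :=
  forall t, 0 <= t <= T -> p t = q t.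

Definition Iexp (R : realType) (n : nat) (a : 'cV[R]_n) (pi : R -> 'rV[R]_n) (t : R) : R :=
  \int[@lebesgue_measure R]_(s in `[0, t]) expR (- pairing (pi s) a).

Definition gammaP (R : realType) (n : nat) (T : R) (pi : R -> 'rV[R]_n) : 'rV[R]_n :=
  pi T.

Definition epsP (R : realType) (n : nat) (a : 'cV[R]_n) (T : R) (pi : R -> 'rV[R]_n) : R :=
  ln (Iexp a pi T).

Definition phiP (R : realType) (n : nat) (a : 'cV[R]_n) (T : R) (pi : R -> 'rV[R]_n) : R :=
  pairing (pi T) a + epsP a T pi.

Definition eP (R : realType) (n : nat) (a : 'cV[R]_n) (av : 'rV[R]_n) (c : R) (T : R)
  (pi : R -> 'rV[R]_n) : R -> 'rV[R]_n :=
  fun t => pi t + ln (1 + (expR c - 1) * expR (- epsP a T pi) * Iexp a pi t) *: av.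

Definition gammaT (R : realType) (n : nat) (T S : R) (p1 p2 : R -> 'rV[R]_n) : 'rV[R]_n :=
  gammaP T p1 + gammaP S p2.

Definition epsT (R : realType) (n : nat) (a : 'cV[R]_n) (T S : R) (p1 p2 : R -> 'rV[R]_n) : R :=
  epsP a T p1 + ln (1 + expR (epsP a S p2 - phiP a T p1)).

Definition phiT (R : realType) (n : nat) (a : 'cV[R]_n) (T S : R) (p1 p2 : R -> 'rV[R]_n) : R :=
  phiP a S p2 + ln (1 + expR (phiP a T p1 - epsP a S p2)).

(* e^{c1}, e^{c2} as in the tensor product rule; c1 c2 are their logarithms. *)
Definition c1T (R : realType) (n : nat) (a : 'cV[R]_n) (c T S : R) (p1 p2 : R -> 'rV[R]_n) : R :=
  ln ((expR (c + phiP a T p1) + expR (epsP a S p2))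
      / (expR (phiP a T p1) + expR (epsP a S p2))).

Definition c2T (R : realType) (n : nat) (a : 'cV[R]_n) (c T S : R) (p1 p2 : R -> 'rV[R]_n) : R :=
  ln ((expR (phiP a T p1) + expR (epsP a S p2))
      / (expR (phiP a T p1) + expR (- c + epsP a S p2))).

Definition eT (R : realType) (n : nat) (a : 'cV[R]_n) (av : 'rV[R]_n) (c T S : R)
  (p1 p2 : R -> 'rV[R]_n) : (R -> 'rV[R]_n) * (R -> 'rV[R]_n) :=
  (eP a av (c1T a c T S p1 p2) T p1, eP a av (c2T a c T S p1 p2) S p2).

Definition concat (R : realType) (n : nat) (T : R) (p1 p2 : R -> 'rV[R]_n) : R -> 'rV[R]_n :=
  fun t => if t <= T then p1 t else p1 T + p2 (t - T).

From HB Require Import structures.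
From mathcomp Require Import all_boot all_order all_algebra.
From mathcomp Require Import all_classical all_reals all_analysis.
From mathcomp Require Import ring lra.
Import Order.TTheory GRing.Theory Num.Theory.
Import numFieldNormedType.Exports.
Local Open Scope classical_set_scope.
Local Open Scope ring_scope.

(* Concatenation splits the integral [I = \int_0^{T+S} e^{-alpha(pi1 * pi2)}]
   as [I1 + e^{-alpha(pi1(T))} I2], by additivity over [[0,T] U [T,T+S]] and a
   translation by [T].  Since [eps] and [phi] are logarithms of these
   integrals, the crystal identities become identities between the positive
   reals [I1], [I2], [e^{alpha(pi1(T))}].  For [e^c_alpha], the partial
   integral of [pi1 * pi2] at a time [t > T] is [I1 + e^{-alpha(pi1(T))} J]
   with [J] the partial integral of [pi2] at [t - T], and
   [1 + (e^c - 1)(I1 + e^{-k} J)/I] factors as [e^{c1}] (the total shift of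
   [e^{c1}_alpha pi1] at time [T]) times the factor of [e^{c2}_alpha pi2]. *)

Section real_analysis.
Context {R : realType}.
Local Notation mu := (@lebesgue_measure R).

Lemma within_continuous_comp_into {V : topologicalType} {A B : set R}
    {f : R -> V} {g : R -> R} :
  {within B, continuous f} -> continuous g -> (forall x, A x -> B (g x)) ->
  {within A, continuous (f \o g)}.
Proof.
move=> /subspace_continuousP cf cg gAB; apply/subspace_continuousP => x Ax P fP.
have fBP : nbhs (g x) (fun y => B y -> P (f y)) := cf _ (gAB _ Ax) P fP.
have gfBP : nbhs x (fun y => B (g y) -> P (f (g y))) := cg x _ fBP.
by apply: filterS gfBP => y By Ay; exact: By (gAB _ Ay).
Qed.

Lemma Rintegral_itv_shift (g : R -> R) (a b h : R) : a <= b ->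
  {within `[a + h, b + h], continuous g} ->
  \int[mu]_(x in `[a + h, b + h]) g x = \int[mu]_(x in `[a, b]) g (x + h).
Proof.
move=> ab cg.
have shift_derive : ((shift h : R -> R)^`())%classic = cst 1.
  apply/funext => x; rewrite derive1E.
  by have := is_derive_shift x 1 h => /@derive_val ->.
rewrite -[a + h]/(shift h a) -[b + h]/(shift h b) /Rintegral.
rewrite integration_by_substitution_increasing//.
- by congr fine; apply: eq_integral => x _; rewrite shift_derive /= mulr1.
- by move=> x y _ _; rewrite /shift ltrD2r.
- by rewrite shift_derive => x _; exact: cst_continuous.
- by rewrite shift_derive; exact: is_cvg_cst.
- by rewrite shift_derive; exact: is_cvg_cst.
- split.
  + by move=> x _; apply: derivableD; [exact: derivable_id | exact: derivable_cst].
  + by apply: cvg_at_right_filter; apply: cvgD; [exact: cvg_id | exact: cvg_cst].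
  + by apply: cvg_at_left_filter; apply: cvgD; [exact: cvg_id | exact: cvg_cst].
Qed.

Lemma Rintegral_itv_splitr (f : R -> R) (a m b : R) : a <= m <= b ->
  mu.-integrable `[a, b] (EFin \o f) ->
  \int[mu]_(x in `[a, b]) f x =
  \int[mu]_(x in `[a, m]) f x + \int[mu]_(x in `[m, b]) f x.
Proof.
move=> /andP[am mb] intf.
have := @Rintegral_itvB _ f (BLeft a) (BRight b) m intf.
rewrite !bnd_simp am mb => /(_ isT isT) /eqP; rewrite subr_eq => /eqP ->.
rewrite addrC Rintegral_itv_obnd_cbnd//.
by apply: integrableS intf => //; apply: subset_itvr; rewrite bnd_simp.
Qed.

Lemma scalerD_split (V : lmodType R) (u v w : V) (r r1 r2 : R) : r = r1 + r2 ->
  u + v + r *: w = (u + r1 *: w) + (v + r2 *: w).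
Proof. by move=> ->; rewrite scalerDl addrACA. Qed.

Lemma expRN_ln (x : R) : 0 < x -> expR (- ln x) = x^-1.
Proof. by move=> x0; rewrite expRN lnK ?posrE. Qed.

Lemma convex_combination_gt0 (E s : R) : 0 < E -> 0 <= s <= 1 -> 0 < 1 + (E - 1) * s.
Proof. by move=> E0 /andP[s0 s1]; nra. Qed.

End real_analysis.

Section paths.
Context {R : realType} {n : nat} (a : 'cV[R]_n).
Local Notation mu := (@lebesgue_measure R).
Implicit Types (p : R -> 'rV[R]_n) (L T S t : R).

Lemma pairingD (x y : 'rV[R]_n) : pairing (x + y) a = pairing x a + pairing y a.
Proof. by rewrite /pairing mulmxDl mxE. Qed.

Lemma pairing_continuous : continuous (fun x : 'rV[R]_n => pairing x a).
Proof.
have -> : (fun x : 'rV[R]_n => pairing x a) = (fun x => \sum_j x 0 j * a j 0).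
  by apply/funext => x; rewrite /pairing mxE.
apply: continuous_big; first exact: add_continuous.
move=> j _ x; apply: continuousM; last exact: cst_continuous.
exact: coord_continuous.
Qed.

Local Notation weight p := (fun s => expR (- pairing (p s) a)).

Lemma is_path_weight_continuous L p : is_path L p ->
  {within `[0, L], continuous (weight p)}.
Proof.
move=> [cp _].
apply: (within_continuous_comp _ _ (fun x => expR (- pairing x a))) => //.
move=> x _; apply: continuous_comp; last exact: continuous_expR.
apply: continuous_comp; [exact: pairing_continuous | exact: opp_continuous].
Qed.

Lemma is_path_weight_integrable L p t : is_path L p -> t <= L ->
  mu.-integrable `[0, t] (EFin \o weight p).
Proof.
move=> hp tL; apply: continuous_compact_integrable; first exact: segment_compact.
apply: (continuous_subspaceW _ (is_path_weight_continuous _ _ hp)) => x /=.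
by rewrite !in_itv /= => /andP[-> /le_trans]; apply.
Qed.

Lemma Iexp_ge0 p t : 0 <= Iexp a p t.
Proof. by apply: Rintegral_ge0 => x _; exact: expR_ge0. Qed.

Lemma Iexp_le L p t : is_path L p -> 0 <= t <= L -> Iexp a p t <= Iexp a p L.
Proof.
move=> hp tL; rewrite /Iexp (Rintegral_itv_splitr _ _ _ _ tL) ?lerDl.
  by apply: Rintegral_ge0 => x _; exact: expR_ge0.
exact: is_path_weight_integrable _ _ _ hp (lexx L).
Qed.

Lemma Iexp_gt0 L p : is_path L p -> 0 < L -> 0 < Iexp a p L.
Proof.
move=> hp L0.
have [c _ cmin] := EVT_min (ltW L0) (is_path_weight_continuous _ _ hp).
apply: (@lt_le_trans _ _ (\int[mu]_(s in `[0, L]) expR (- pairing (p c) a))).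
  rewrite Rintegral_cst//= lebesgue_measure_itv /= lte_fin L0 /= subr0.
  by rewrite mulr_gt0 ?expR_gt0.
apply: le_Rintegral => //; last exact: is_path_weight_integrable _ _ _ hp (lexx L).
apply: continuous_compact_integrable; first exact: segment_compact.
by apply: continuous_subspaceT => x; exact: cst_continuous.
Qed.

Lemma concat_le T p1 p2 t : t <= T -> concat T p1 p2 t = p1 t.
Proof. by move=> tT; rewrite /concat tT. Qed.

Lemma concat_gt T p1 p2 t : T < t -> concat T p1 p2 t = p1 T + p2 (t - T).
Proof. by move=> Tt; rewrite /concat leNgt Tt. Qed.

Lemma concat_shift T p1 p2 s : p2 0 = 0 -> 0 <= s ->
  concat T p1 p2 (s + T) = p1 T + p2 s.
Proof.
move=> p20; rewrite le_eqVlt => /predU1P[<-|s0].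
  by rewrite concat_le add0r ?p20 ?addr0.
by rewrite /concat gerDr leNgt s0 /= addrK.
Qed.

Lemma concat_minmax T p1 p2 : p2 0 = 0 ->
  concat T p1 p2 = fun t => p1 (Num.min t T) + p2 (Num.max (t - T) 0).
Proof.
move=> p20; apply/funext => t; rewrite /concat.
case: (leP t T) => tT.
  by rewrite (max_idPr _) ?p20 ?addr0 // subr_le0.
by rewrite (max_idPl _) // subr_ge0 ltW.
Qed.

Lemma is_path_concat T S p1 p2 : 0 <= T -> 0 <= S ->
  is_path T p1 -> is_path S p2 -> is_path (T + S) (concat T p1 p2).
Proof.
move=> T0 S0 [c1 p10] [c2 p20]; split; last by rewrite concat_le.
rewrite concat_minmax //; apply: within_continuousD.
- apply: (within_continuous_comp_into c1).
    by move=> x; apply: continuous_min => //; exact: cst_continuous.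
  move=> x /=; rewrite !in_itv /= => /andP[x0 _].
  by rewrite ge_min lexx orbT le_min x0 T0.
- apply: (within_continuous_comp_into c2).
    move=> x; apply: (continuous_max (f := fun y => y - T) (g := cst 0)).
      by apply: continuousB => //; exact: cst_continuous.
    exact: cst_continuous.
  move=> x /=; rewrite !in_itv /= => /andP[_ xTS].
  by rewrite le_max lexx orbT ge_max lerBlDl xTS S0.
Qed.

Lemma Iexp_concat_le T p1 p2 t : t <= T -> Iexp a (concat T p1 p2) t = Iexp a p1 t.
Proof.
move=> tT; apply: eq_Rintegral => s; rewrite inE /= in_itv /= => /andP[_ st].
by rewrite concat_le // (le_trans st tT).
Qed.

Lemma Iexp_concat_ge T S p1 p2 t : 0 <= T ->
  is_path T p1 -> is_path S p2 -> T <= t <= T + S ->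
  Iexp a (concat T p1 p2) t =
  Iexp a p1 T + expR (- pairing (p1 T) a) * Iexp a p2 (t - T).
Proof.
move=> T0 hp1 hp2 /andP[Tt tTS].
have S0 : 0 <= S by rewrite -(lerD2l T) addr0 (le_trans Tt tTS).
have hp := is_path_concat _ _ _ _ T0 S0 hp1 hp2.
have T_mid : 0 <= T <= t by rewrite T0 Tt.
have int_concat := is_path_weight_integrable _ _ _ hp tTS.
rewrite [LHS]/Iexp (Rintegral_itv_splitr _ _ _ _ T_mid int_concat).
rewrite -/(Iexp a (concat T p1 p2) T) Iexp_concat_le // /Iexp -RintegralZl //; last first.
  by apply: is_path_weight_integrable _ _ _ hp2 _; rewrite lerBlDl.
congr (_ + _).
have -> : `[T, t]%classic = `[0 + T, t - T + T]%classic :> set R.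
  by rewrite add0r subrK.
rewrite Rintegral_itv_shift ?subr_ge0 //; last first.
  rewrite add0r subrK; apply: (continuous_subspaceW _ (is_path_weight_continuous _ _ hp)).
  move=> x /=; rewrite !in_itv /= => /andP[Tx xt].
  by rewrite (le_trans T0 Tx) (le_trans xt).
apply: eq_Rintegral => s; rewrite inE /= in_itv /= => /andP[s0 _].
by rewrite concat_shift // ?(proj2 hp2) // pairingD opprD expRD.
Qed.

End paths.

Section positive_reals.
Context {R : realType} {x y k : R}.
Hypotheses (x0 : 0 < x) (y0 : 0 < y).

Let I_gt0 : 0 < x + expR (- k) * y.
Proof. by rewrite addr_gt0 ?mulr_gt0 ?expR_gt0. Qed.

Lemma ln_addr_expR :
  ln (x + expR (- k) * y) = ln x + ln (1 + expR (ln y - (k + ln x))).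
Proof.
rewrite -lnM ?posrE ?addr_gt0 ?expR_gt0 //; congr ln.
rewrite !(expRD, expRN) !lnK ?posrE //.
by field; rewrite !lt0r_neq0 ?expR_gt0.
Qed.

Lemma ln_addr_expR_swap (l : R) :
  k + l + ln (x + expR (- k) * y) = l + ln y + ln (1 + expR (k + ln x - ln y)).
Proof.
apply: expR_inj; rewrite !(expRD, expRN).
rewrite !lnK ?posrE ?addr_gt0 ?mulr_gt0 ?divr_gt0 ?invr_gt0 ?expR_gt0 //.
by field; rewrite !lt0r_neq0 ?expR_gt0.
Qed.

(* The exponents [c1], [c2] of the tensor product rule, for
   [x = e^{eps(pi1)}], [y = e^{eps(pi2)}] and [k = alpha(pi1(T))]. *)
Local Notation c1 c :=
  (ln ((expR (c + (k + ln x)) + expR (ln y)) / (expR (k + ln x) + expR (ln y)))).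
Local Notation c2 c :=
  (ln ((expR (k + ln x) + expR (ln y)) / (expR (k + ln x) + expR (- c + ln y)))).

Lemma expR_c1 (c : R) : expR (c1 c) = 1 + (expR c - 1) * x / (x + expR (- k) * y).
Proof.
rewrite !(expRD, expRN) !lnK ?posrE ?divr_gt0 ?addr_gt0 ?mulr_gt0 ?expR_gt0 //.
by field; rewrite !lt0r_neq0 ?addr_gt0 ?mulr_gt0 ?expR_gt0.
Qed.

Lemma expR_c2 (c : R) : expR (c2 c) = (expR k * x + y) / (expR k * x + expR (- c) * y).
Proof. by rewrite !expRD !lnK ?posrE ?divr_gt0 ?addr_gt0 ?mulr_gt0 ?expR_gt0. Qed.

Lemma tensor_action_left (I c J : R) : I = x + expR (- k) * y ->
  (expR c - 1) * expR (- ln I) * J = (expR (c1 c) - 1) * expR (- ln x) * J.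
Proof.
move=> ->; rewrite expR_c1 !expRN_ln //.
by field; rewrite !lt0r_neq0.
Qed.

Lemma tensor_action_right (I c J : R) : 0 <= J <= y -> I = x + expR (- k) * y ->
  ln (1 + (expR c - 1) * expR (- ln I) * (x + expR (- k) * J)) =
  ln (1 + (expR (c1 c) - 1) * expR (- ln x) * x) +
  ln (1 + (expR (c2 c) - 1) * expR (- ln y) * J).
Proof.
move=> /andP[J0 Jy] ->; rewrite !expRN_ln //.
have -> : 1 + (expR (c1 c) - 1) * x^-1 * x = expR (c1 c).
  by field; rewrite lt0r_neq0.
rewrite -lnM ?posrE ?expR_gt0 //; last first.
  rewrite -mulrA convex_combination_gt0 ?expR_gt0 //.
  by rewrite mulr_ge0 ?invr_ge0 ?(ltW y0) //= ler_pdivrMl // mulr1.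
congr ln; rewrite expR_c1 expR_c2 !expRN.
by field; rewrite !lt0r_neq0 ?addr_gt0 ?mulr_gt0 ?expR_gt0.
Qed.

End positive_reals.

Section concatenation_bijective.
Variables (R : realType) (n : nat) (T S : R).
Hypotheses (T0 : 0 <= T) (S0 : 0 <= S).
Implicit Types (p : R -> 'rV[R]_n).

Lemma concat_surjective p : is_path (T + S) p ->
  exists p1 p2, [/\ is_path T p1, is_path S p2 & path_eq (T + S) (concat T p1 p2) p].
Proof.
move=> [cp p0]; exists p, (fun s => p (s + T) - p T); split.
- split => //; apply: (continuous_subspaceW _ cp) => x /=.
  by rewrite !in_itv /= => /andP[-> xT]; rewrite (le_trans xT) ?lerDl.
- split; last by rewrite add0r subrr.
  apply: within_continuousB; last first.
    by apply: continuous_subspaceT => x; exact: cst_continuous.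
  apply: (within_continuous_comp_into cp).
    by move=> x; apply: continuousD => //; exact: cst_continuous.
  move=> x /=; rewrite !in_itv /= => /andP[x0 xS].
  by rewrite addr_ge0 // addrC lerD2l.
- move=> t /andP[t0 tTS]; rewrite /concat; case: ifP => // _.
  by rewrite subrK addrC subrK.
Qed.

Lemma concat_injective p1 p2 q1 q2 : p2 0 = 0 -> q2 0 = 0 ->
  path_eq (T + S) (concat T p1 p2) (concat T q1 q2) ->
  path_eq T p1 q1 /\ path_eq S p2 q2.
Proof.
move=> p20 q20 eq12.
have eq1 : path_eq T p1 q1.
  move=> t /andP[t0 tT]; rewrite -(concat_le T p1 p2 t tT) -(concat_le T q1 q2 t tT).
  by apply: eq12; rewrite t0 (le_trans tT) ?lerDl.
split => // s /andP[s0 sS]; apply: (addrI (p1 T)).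
rewrite -concat_shift // eq1 ?lexx ?T0 // -concat_shift //.
by apply: eq12; rewrite addr_ge0 //= addrC lerD2l.
Qed.

End concatenation_bijective.

Section concatenation_crystal.
Variables (R : realType) (n : nat) (a : 'cV[R]_n) (av : 'rV[R]_n).
Variables (T S : R) (p1 p2 : R -> 'rV[R]_n).
Hypotheses (T0 : 0 < T) (S0 : 0 < S) (hp1 : is_path T p1) (hp2 : is_path S p2).

Local Notation I1 := (Iexp a p1 T).
Local Notation I2 := (Iexp a p2 S).
Local Notation k := (pairing (p1 T) a).

Let I1_gt0 : 0 < I1. Proof. exact: Iexp_gt0 a _ _ hp1 T0. Qed.
Let I2_gt0 : 0 < I2. Proof. exact: Iexp_gt0 a _ _ hp2 S0. Qed.

Lemma concat_end : concat T p1 p2 (T + S) = p1 T + p2 S.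
Proof. by rewrite addrC concat_shift ?(proj2 hp2) ?ltW. Qed.

Lemma gammaP_concat : gammaP (T + S) (concat T p1 p2) = gammaT T S p1 p2.
Proof. exact: concat_end. Qed.

Lemma Iexp_concat_end :
  Iexp a (concat T p1 p2) (T + S) = I1 + expR (- k) * I2.
Proof.
rewrite (Iexp_concat_ge a _ _ _ _ _ (ltW T0) hp1 hp2) ?lexx ?lerDl ?ltW //.
by rewrite addrAC subrr add0r.
Qed.

Lemma epsP_concat : epsP a (T + S) (concat T p1 p2) = epsT a T S p1 p2.
Proof. by rewrite /epsT /phiP /epsP Iexp_concat_end ln_addr_expR. Qed.

Lemma phiP_concat : phiP a (T + S) (concat T p1 p2) = phiT a T S p1 p2.
Proof.
by rewrite /phiT /phiP /epsP concat_end pairingD Iexp_concat_end ln_addr_expR_swap.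
Qed.

Lemma eP_concat c :
  path_eq (T + S) (eP a av c (T + S) (concat T p1 p2))
    (concat T (eT a av c T S p1 p2).1 (eT a av c T S p1 p2).2).
Proof.
move=> t /andP[t0 tTS].
case: (leP t T) => [tT | Tt].
  rewrite (concat_le T (eT a av c T S p1 p2).1 _ _ tT) /eT /= /eP /c1T /phiP /epsP.
  rewrite (concat_le T p1 p2 t tT) (Iexp_concat_le a T p1 p2 t tT).
  exact: (congr1 (fun z => p1 t + ln (1 + z) *: av)
    (tensor_action_left I1_gt0 I2_gt0 _ c _ Iexp_concat_end)).
have J_bounds : 0 <= Iexp a p2 (t - T) <= I2.
  by rewrite Iexp_ge0 (Iexp_le _ _ _ _ hp2) // subr_ge0 (ltW Tt) lerBlDl.
rewrite (concat_gt T (eT a av c T S p1 p2).1 _ _ Tt) /eT /= /eP /c1T /c2T /phiP /epsP.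
have t_mid : T <= t <= T + S by rewrite (ltW Tt).
rewrite (concat_gt T p1 p2 t Tt) (Iexp_concat_ge a T S p1 p2 t (ltW T0) hp1 hp2 t_mid).
exact: scalerD_split
  (tensor_action_right I1_gt0 I2_gt0 _ c _ J_bounds Iexp_concat_end).
Qed.

End concatenation_crystal.

Theorem mainTheorem3 (R : realType) (n : nat)
  (alpha : 'I_n -> 'cV[R]_n) (coroot : 'I_n -> 'rV[R]_n)
  (Hroot : semisimple_root_datum alpha coroot)
  (T S : R) (hT : 0 < T) (hS : 0 < S) :
  (* theta is a bijection C_0([0,T]) x C_0([0,S]) -> C_0([0,T+S]) *)
  ((forall p : R -> 'rV[R]_n, is_path (T + S) p ->
      exists p1 p2, [/\ is_path T p1, is_path S p2 & path_eq (T + S) (concat T p1 p2) p]) /\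
   (forall p1 p2 q1 q2 : R -> 'rV[R]_n, is_path T p1 -> is_path S p2 ->
      is_path T q1 -> is_path S q2 ->
      path_eq (T + S) (concat T p1 p2) (concat T q1 q2) ->
      path_eq T p1 q1 /\ path_eq S p2 q2)) /\
  (* theta maps into C_0([0,T+S]) and preserves the crystal structure *)
  (forall p1 p2 : R -> 'rV[R]_n, is_path T p1 -> is_path S p2 ->
     is_path (T + S) (concat T p1 p2) /\
     gammaP (T + S) (concat T p1 p2) = gammaT T S p1 p2 /\
     forall (i : 'I_n) (c : R),
       [/\ epsP (alpha i) (T + S) (concat T p1 p2) = epsT (alpha i) T S p1 p2,
           phiP (alpha i) (T + S) (concat T p1 p2) = phiT (alpha i) T S p1 p2 &
           path_eq (T + S)
             (eP (alpha i) (coroot i) c (T + S) (concat T p1 p2))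
             (concat T (eT (alpha i) (coroot i) c T S p1 p2).1
                       (eT (alpha i) (coroot i) c T S p1 p2).2)]).
Proof.
have [T0 S0] := (ltW hT, ltW hS).
split.
  split; first exact: concat_surjective.
  by move=> p1 p2 q1 q2 _ [_ p20] _ [_ q20]; exact: concat_injective.
move=> p1 p2 hp1 hp2; split; first exact: is_path_concat.
split; first exact: gammaP_concat.
by move=> i c; split; [apply: epsP_concat | apply: phiP_concat | apply: eP_concat].
Qed.
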